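(* Let $W$ be a $p$-locally dense, $p$-regular graphon. Then the kernel $W-p$ is positive semidefinite.
   Context: Let $(\Omega,\mu)$ be an atomless standard probability space. A graphon is a symmetric measurable $W:\Omega\times\Omega\to[0,1]$; it is $p$-regular if $\int_\Omega W(x,y)\,dy=p$ for a.e. $x$, and $p$-locally dense if $\iint_{U\times U}W\ge p\,\mu(U)^2$ for every measurable $U\subseteq\Omega$. A kernel (bounded symmetric measurable $K:\Omega\times\Omega\to\mathbb R$) is positive semidefinite if $\iint f(x)K(x,y)f(y)\,dx\,dy\ge0$ for every bounded measurable $f:\Omega\to\mathbb R$. *)

From HB Require Import structures.
From mathcomp Require Import all_boot all_order all_algebra.
From mathcomp Require Import all_classical all_reals all_analysis.
Set Implicit Arguments. Unset Strict Implicit. Unset Printing Implicit Defensive.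
Import Order.TTheory GRing.Theory Num.Theory.
Local Open Scope classical_set_scope.
Local Open Scope ring_scope.

(* (T, mu) is a standard probability space: the measurable space T is Borel
   isomorphic to a Borel subset of R (standard Borel space). *)
Definition standard_borel (d : measure_display) (T : measurableType d)
  (R : realType) : Prop :=
  exists f : T -> R, injective f /\ measurable_fun setT f /\
    measurable (range f) /\ (forall A : set T, measurable A -> measurable (f @` A)).

Definition atomless (d : measure_display) (T : measurableType d) (R : realType)
  (mu : probability T R) : Prop :=
  forall A : set T, measurable A -> (0 < mu A)%E ->
    exists B : set T, [/\ measurable B, B `<=` A, (0 < mu B)%E & (mu B < mu A)%E].

Definition kernel_fun (d : measure_display) (T : measurableType d) (R : realType)
  (K : T -> T -> R) : Prop :=
  [/\ (forall x y, K x y = K y x),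
      measurable_fun setT (fun z : T * T => K z.1 z.2)
    & exists M : R, forall x y, `|K x y| <= M].

Definition graphon (d : measure_display) (T : measurableType d) (R : realType)
  (W : T -> T -> R) : Prop :=
  [/\ (forall x y, W x y = W y x),
      measurable_fun setT (fun z : T * T => W z.1 z.2)
    & forall x y, 0 <= W x y <= 1].

Definition p_regular (d : measure_display) (T : measurableType d) (R : realType)
  (mu : probability T R) (p : R) (W : T -> T -> R) : Prop :=
  {ae mu, forall x, (\int[mu]_y (W x y)%:E = p%:E)%E}.

Definition p_locally_dense (d : measure_display) (T : measurableType d) (R : realType)
  (mu : probability T R) (p : R) (W : T -> T -> R) : Prop :=
  forall U : set T, measurable U ->
    ((p * fine (mu U) ^+ 2)%:E <=
       \int[(mu \x mu)%E]_(z in U `*` U) (W z.1 z.2)%:E)%E.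

Definition psd_kernel (d : measure_display) (T : measurableType d) (R : realType)
  (mu : probability T R) (K : T -> T -> R) : Prop :=
  kernel_fun K /\
  forall f : T -> R, measurable_fun setT f -> (exists M : R, forall x, `|f x| <= M) ->
    (0 <= \int[(mu \x mu)%E]_z (f z.1 * K z.1 z.2 * f z.2)%:E)%E.

(* Write K := W - p and B(f, g) := \iint f(x) K(x, y) g(y) (the form [kform]).
   Regularity makes B vanish against constants, so writing a bounded f as
   -r + 2 r g with 0 <= g <= 1 gives B(f, f) = 4 r^2 B(g, g), and local density
   says B(1_A, 1_A) >= 0.  A [0,1]-valued g is rounded to an indicator one
   small piece S at a time: if g stays within del of a constant on S, replacing
   it there by a constant t makes B(g, g) quadratic in t with leading
   coefficient B(1_S, 1_S) = O(mu(S)^2), so one of t = 0, t = 1 loses at most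
   O((del + mu(S)) mu(S)).  With pieces of measure at most 1/N on which g
   oscillates by at most 1/N the total loss is O(1/N); such pieces exist since
   quantiles of a bounded injective Borel map cut an atomless standard space
   into sets of measure 1/N. *)

From HB Require Import structures.
From mathcomp Require Import all_boot all_order all_algebra.
From mathcomp Require Import all_classical all_reals all_analysis.
From mathcomp Require Import ring lra measurable_realfun.
Set Implicit Arguments. Unset Strict Implicit. Unset Printing Implicit Defensive.
Import Order.TTheory GRing.Theory Num.Theory.
Local Open Scope classical_set_scope.
Local Open Scope ring_scope.

Section bounded_mfun.
Context d (U : measurableType d) (R : realType).

Definition bounded_mfun (f : U -> R) :=
  measurable_fun setT f /\ exists c, forall z, `|f z| <= c.

Lemma bounded_mfun_cst c : bounded_mfun (cst c).
Proof. by split; [exact: measurable_cst | exists `|c|]. Qed.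

Lemma bounded_mfun_indic A : measurable A -> bounded_mfun \1_A.
Proof.
move=> mA; split; first exact: measurable_indic.
by exists 1 => z; rewrite indicE; case: (_ \in _); rewrite ?normr1 ?normr0.
Qed.

Lemma bounded_mfunD f g : bounded_mfun f -> bounded_mfun g -> bounded_mfun (f \+ g).
Proof.
move=> [mf [a fa]] [mg [b gb]]; split; first exact: measurable_funD.
by exists (a + b) => z; rewrite (le_trans (ler_normD _ _))// lerD.
Qed.

Lemma bounded_mfunB f g : bounded_mfun f -> bounded_mfun g -> bounded_mfun (f \- g).
Proof.
move=> [mf [a fa]] [mg [b gb]]; split; first exact: measurable_funB.
by exists (a + b) => z; rewrite (le_trans (ler_normB _ _))// lerD.
Qed.

Lemma bounded_mfunM f g : bounded_mfun f -> bounded_mfun g -> bounded_mfun (f \* g).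
Proof.
move=> [mf [a fa]] [mg [b gb]]; split; first exact: measurable_funM.
by exists (a * b) => z; rewrite normrM ler_pM.
Qed.

Lemma bounded_mfun_integrable (nu : {measure set U -> \bar R}) f :
  (nu setT < +oo)%E -> bounded_mfun f -> nu.-integrable setT (EFin \o f).
Proof.
move=> nuT [mf [c fc]]; apply: measurable_bounded_integrable => //.
exists c; split => [|M cM z _]; first exact: num_real.
exact: le_trans (fc z) (ltW cM).
Qed.

Lemma Rintegral_indic (nu : {measure set U -> \bar R}) S : measurable S ->
  Rintegral nu setT (fun z => \1_S z) = fine (nu S).
Proof. by move=> mS; rewrite /Rintegral integral_indic// setIT. Qed.

End bounded_mfun.

Section probability_fine.
Context d (T : measurableType d) (R : realType) (mu : probability T R).
Local Notation m A := (fine (mu A)).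

Lemma probability_fineK A : measurable A -> (m A)%:E = mu A.
Proof. by move=> mA; rewrite fineK// fin_num_measure. Qed.

Lemma probability_setT_lty : (mu setT < +oo)%E.
Proof. by rewrite probability_setT ltry. Qed.

Lemma fine_probability_ge0 A : 0 <= m A.
Proof. exact/fine_ge0/measure_ge0. Qed.

Lemma fine_probability_le1 A : measurable A -> m A <= 1.
Proof. by move=> mA; rewrite -lee_fin probability_fineK// probability_le1. Qed.

Lemma le_fine_probability A B :
  measurable A -> measurable B -> A `<=` B -> m A <= m B.
Proof. by move=> mA mB AB; rewrite -lee_fin !probability_fineK// le_measure// inE. Qed.

Lemma fine_probabilityU A B : measurable A -> measurable B -> A `&` B = set0 ->
  m (A `|` B) = m A + m B.
Proof.
move=> mA mB AB; apply: EFin_inj.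
by rewrite EFinD !probability_fineK ?measureU//; exact: measurableU.
Qed.

Lemma fine_product_probabilityX A B : measurable A -> measurable B ->
  (mu \x mu)%E (A `*` B) = (m A * m B)%:E.
Proof. by move=> mA mB; rewrite product_measure1E// EFinM !probability_fineK. Qed.

Lemma product_probability_setT_lty : ((mu \x mu)%E setT < +oo)%E.
Proof. by rewrite -setXTT fine_product_probabilityX// probability_setT mulr1 ltry. Qed.

End probability_fine.

Lemma indicX (T1 T2 : Type) (R : pzRingType) (A : set T1) (C : set T2) z :
  \1_(A `*` C) z = \1_A z.1 * \1_C z.2 :> R.
Proof.
by rewrite !indicE in_setX; case: (_ \in A); case: (_ \in C); rewrite ?mulr1 ?mulr0.
Qed.

Section kernel_form.
Context d (T : measurableType d) (R : realType) (mu : probability T R).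
Local Notation m A := (fine (mu A)).
Local Notation P := (mu \x mu)%E.
Variables (K : T -> T -> R) (M : R).
Hypothesis mK : measurable_fun setT (fun z : T * T => K z.1 z.2).
Hypothesis K_le : forall x y, `|K x y| <= M.

Definition kform (f g : T -> R) :=
  Rintegral P setT (fun z => f z.1 * K z.1 z.2 * g z.2).

Lemma kform_integrable f g : bounded_mfun f -> bounded_mfun g ->
  P.-integrable setT (EFin \o fun z => f z.1 * K z.1 z.2 * g z.2).
Proof.
move=> [mf [a fa]] [mg [b gb]].
apply: bounded_mfun_integrable; first exact: product_probability_setT_lty.
split.
  apply: measurable_funM; last exact: measurableT_comp mg measurable_snd.
  by apply: measurable_funM => //; exact: measurableT_comp mf measurable_fst.
exists (a * M * b) => z; rewrite !normrM.
by rewrite ler_pM ?mulr_ge0 ?ler_pM.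
Qed.

Lemma kformE f g : bounded_mfun f -> bounded_mfun g ->
  (kform f g)%:E = (\int[P]_z (f z.1 * K z.1 z.2 * g z.2)%:E)%E.
Proof.
by move=> bf bg; rewrite fineK// (integrable_fin_num measurableT (kform_integrable bf bg)).
Qed.

Section bilinear.
Variables (f f' g g' : T -> R) (a : R).
Hypotheses (bf : bounded_mfun f) (bf' : bounded_mfun f').
Hypotheses (bg : bounded_mfun g) (bg' : bounded_mfun g').

Lemma kformDl : kform (fun x => f x + f' x) g = kform f g + kform f' g.
Proof.
rewrite /kform -RintegralD//; last 2 first; try exact: kform_integrable.
by congr Rintegral; apply/funext => z; rewrite /= !mulrDl.
Qed.

Lemma kformDr : kform f (fun x => g x + g' x) = kform f g + kform f g'.
Proof.
rewrite /kform -RintegralD//; last 2 first; try exact: kform_integrable.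
by congr Rintegral; apply/funext => z; rewrite /= mulrDr.
Qed.

Lemma kformZl : kform (fun x => a * f x) g = a * kform f g.
Proof.
rewrite /kform -RintegralZl//; last exact: kform_integrable.
by congr Rintegral; apply/funext => z; rewrite /= !mulrA.
Qed.

Lemma kformZr : kform f (fun x => a * g x) = a * kform f g.
Proof.
rewrite /kform -RintegralZl//; last exact: kform_integrable.
by congr Rintegral; apply/funext => z; rewrite /= mulrCA.
Qed.

End bilinear.

Lemma kform_expand f g a : bounded_mfun f -> bounded_mfun g ->
  kform (fun x => f x + a * g x) (fun x => f x + a * g x) =
  kform f f + a * (kform f g + kform g f) + a ^+ 2 * kform g g.
Proof.
move=> bf bg.
have bag : bounded_mfun (fun x => a * g x) by exact: bounded_mfunM (bounded_mfun_cst _ _) bg.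
have bfag : bounded_mfun (fun x => f x + a * g x) by exact: bounded_mfunD.
rewrite kformDl // kformZl // !kformDr // !kformZr //.
by ring.
Qed.

Lemma kform_le f g a b A C : measurable A -> measurable C ->
  bounded_mfun f -> bounded_mfun g ->
  (forall x, `|f x| <= a * \1_A x) -> (forall x, `|g x| <= b * \1_C x) ->
  `|kform f g| <= M * a * b * (m A * m C).
Proof.
move=> mA mC bf bg fA gC.
have mAC : measurable (A `*` C) by exact: measurableX.
have iF := kform_integrable bf bg.
have iAC : P.-integrable setT (EFin \o \1_(A `*` C)).
  exact: bounded_mfun_integrable (product_probability_setT_lty mu) (bounded_mfun_indic _ mAC).
apply: le_trans (le_normr_Rintegral measurableT iF) _.
have iMAC := integrableZl measurableT (M * a * b) iAC.
apply: le_trans (le_Rintegral measurableT (integrable_norm iF) iMAC _) _.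
  move=> z _ /=; rewrite indicX !normrM.
  rewrite (_ : _ * _ * _ * _ = a * \1_A z.1 * M * (b * \1_C z.2)); last by ring.
  by rewrite ler_pM ?mulr_ge0 ?ler_pM.
by rewrite RintegralZl// Rintegral_indic//= fine_product_probabilityX.
Qed.

End kernel_form.

Definition zero_one (R : numDomainType) (v : R) := v = 0 \/ v = 1.

Lemma quadratic_01_le (R : realFieldType) (A b c a : R) : 0 <= a <= 1 ->
  exists2 t, zero_one t & A + b * t + c * t ^+ 2 <= A + b * a + c * a ^+ 2 + `|c|.
Proof.
move=> /andP[a0 a1].
have interp : A + b * a + c * a ^+ 2 + a * (1 - a) * c =
    (1 - a) * A + a * (A + b + c) by ring.
have ac : a * (1 - a) * c <= `|c|.
  have : 0 <= a * (1 - a) <= 1 by apply/andP; split; nra.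
  by have := ler_norm c; have := lerNnormlW (lexx `|c|); nra.
have [le01|le10] := lerP A (A + b + c).
  by exists 0; [left | rewrite mulr0 expr0n /= mulr0 !addr0; nra].
by exists 1; [right | rewrite mulr1 expr1n mulr1; nra].
Qed.

Definition unrounded (T : Type) (R : numDomainType) (h : T -> R) :=
  [set x | ~ zero_one (h x)].

Lemma measurable_unrounded d (T : measurableType d) (R : realType) (h : T -> R) :
  measurable_fun setT h -> measurable (unrounded h).
Proof.
move=> mh; have mpre (v : R) : measurable (h @^-1` [set v]).
  by rewrite -[_ @^-1` _]setTI; exact: mh.
rewrite (_ : unrounded h = ~` (h @^-1` [set 0] `|` h @^-1` [set 1])).
  exact/measurableC/measurableU.
by apply/seteqP; split => x /=; rewrite /zero_one.
Qed.

Section replace_on.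
Context (T : Type) (R : realType).

(* Affine in [t], so that [kform_expand] applies. *)
Definition replace_on (S : set T) (t : R) (h : T -> R) x :=
  h x * (1 - \1_S x) + t * \1_S x.

Lemma replace_on_in S t h x : S x -> replace_on S t h x = t.
Proof. by move=> Sx; rewrite /replace_on indicE mem_set// subrr mulr0 mulr1 add0r. Qed.

Lemma replace_on_out S t h x : ~ S x -> replace_on S t h x = h x.
Proof. by move=> Sx; rewrite /replace_on indicE memNset// subr0 mulr1 mulr0 addr0. Qed.

Lemma unrounded_replace_onI S t h :
  zero_one t -> unrounded (replace_on S t h) `&` S = set0.
Proof.
move=> t01; apply/seteqP; split => x // -[ux Sx].
by apply: ux; rewrite replace_on_in.
Qed.

Lemma unrounded_replace_onU S t h : zero_one t -> S `<=` unrounded h ->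
  unrounded (replace_on S t h) `|` S = unrounded h.
Proof.
move=> t01 Sh; apply/seteqP; split => x; last first.
  have [Sx|Sx] := pselect (S x); first by right.
  by left; change (~ zero_one (replace_on S t h x)); rewrite replace_on_out.
case=> [|/Sh//]; have [Sx|Sx] := pselect (S x).
  by move=> ux; case: ux; rewrite replace_on_in.
by change (~ zero_one (replace_on S t h x) -> ~ zero_one (h x)); rewrite replace_on_out.
Qed.

End replace_on.

Lemma bounded_mfun_replace_on d (T : measurableType d) (R : realType)
    (S : set T) (t : R) (h : T -> R) :
  measurable S -> bounded_mfun h -> bounded_mfun (replace_on S t h).
Proof.
move=> mS bh; have bS := bounded_mfun_indic R mS.
apply: bounded_mfunD; apply: bounded_mfunM => //; last exact: bounded_mfun_cst.
exact: bounded_mfunB (bounded_mfun_cst _ _) bS.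
Qed.

Section rounding.
Context d (T : measurableType d) (R : realType) (mu : probability T R).
Local Notation m A := (fine (mu A)).
Variables (K : T -> T -> R) (M : R).
Hypothesis mK : measurable_fun setT (fun z : T * T => K z.1 z.2).
Hypothesis K_le : forall x y, `|K x y| <= M.
Local Notation I f := (kform mu K f f).

Let M_ge0 : 0 <= M. Proof. exact: le_trans (normr_ge0 _) (K_le point point). Qed.

Lemma kform_perturb f e del S : measurable S -> bounded_mfun f -> bounded_mfun e ->
  (forall x, `|f x| <= 1) -> (forall x, `|e x| <= del * \1_S x) ->
  I f - M * (2 * del + del ^+ 2) * m S <= I (fun x => f x + e x).
Proof.
move=> mS bf be f1 eS.
have f1T x : `|f x| <= 1 * \1_setT x by rewrite indicE in_setT mul1r.
have bfe := kform_le mu mK K_le measurableT mS bf be f1T eS.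
have bef := kform_le mu mK K_le mS measurableT be bf eS f1T.
have bee := kform_le mu mK K_le mS mS be be eS eS.
rewrite probability_setT /= !mul1r !mulr1 in bfe bef.
have mS2 : M * del * del * (m S * m S) <= M * del ^+ 2 * m S.
  have mS1 : m S * m S <= m S.
    by rewrite ler_piMl ?fine_probability_ge0 ?fine_probability_le1.
  rewrite -(mulrA M) -expr2; apply: ler_wpM2l => //.
  exact: mulr_ge0 M_ge0 (sqr_ge0 del).
rewrite (_ : (fun x => f x + e x) = fun x => f x + 1 * e x); last first.
  by apply/funext => x; rewrite mul1r.
rewrite (kform_expand mu mK K_le)// expr1n !mul1r.
move: bfe bef bee; set u := kform _ _ f e; set v := kform _ _ e f; set w := kform _ _ e e.
move=> /lerNnormlW bfe /lerNnormlW bef /lerNnormlW bee.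
by lra.
Qed.

Lemma kform_replace_on_le h S a del eps : measurable S -> bounded_mfun h ->
  (forall x, 0 <= h x <= 1) -> m S <= eps -> 0 <= a <= 1 ->
  (forall x, S x -> a <= h x <= a + del) ->
  exists2 t, zero_one t &
    I (replace_on S t h) - M * (2 * del + del ^+ 2 + eps) * m S <= I h.
Proof.
move=> mS bh h01 Seps a01 hS.
have bS := bounded_mfun_indic R mS.
pose h0 x := h x * (1 - \1_S x).
have bh0 : bounded_mfun h0 := bounded_mfunM bh (bounded_mfunB (bounded_mfun_cst _ _) bS).
pose b := kform mu K h0 \1_S + kform mu K \1_S h0.
have repE t : I (replace_on S t h) = I h0 + b * t + I \1_S * t ^+ 2.
  by rewrite /replace_on (kform_expand mu mK K_le)// (mulrC t) (mulrC (t ^+ 2)).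
have [t t01 t_le] := quadratic_01_le (I h0) b (I \1_S) a01.
exists t => //; rewrite !repE in t_le *.
have perturb : I (replace_on S a h) - M * (2 * del + del ^+ 2) * m S <= I h.
  have hE : (fun x => replace_on S a h x + (h x - a) * \1_S x) = h.
    apply/funext => x; have [Sx|Sx] := pselect (S x).
      by rewrite replace_on_in// indicE mem_set// mulr1 addrC subrK.
    by rewrite replace_on_out// indicE memNset// mulr0 addr0.
  rewrite -[in leRHS]hE; apply: kform_perturb => //.
  - exact: bounded_mfun_replace_on.
  - exact: bounded_mfunM (bounded_mfunB bh (bounded_mfun_cst _ _)) bS.
  - move=> x; have [Sx|Sx] := pselect (S x).
      by rewrite replace_on_in// ger0_norm; case/andP: a01.
    by rewrite replace_on_out// ger0_norm; case/andP: (h01 x).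
  - move=> x; rewrite normrM indicE; case: (boolP (x \in S)) => [/set_mem Sx|_].
      by rewrite normr1 !mulr1 ger0_norm; have := hS x Sx; lra.
    by rewrite normr0 !mulr0.
have S_le : `|I \1_S| <= M * eps * m S.
  have S1 x : `|\1_S x| <= 1 * \1_S x :> R by rewrite mul1r ger0_norm.
  apply: le_trans (kform_le mu mK K_le mS mS bS bS S1 S1) _.
  rewrite !mulr1 mulrA.
  apply: ler_wpM2r; [exact: fine_probability_ge0 | exact: ler_wpM2l].
rewrite repE in perturb.
by move: perturb t_le S_le; lra.
Qed.

Section pieces.
Variables (del eps : R) (S : nat -> set T) (a : nat -> R).
Hypothesis mS : forall i, measurable (S i).
Hypothesis S_le : forall i, m (S i) <= eps.
Hypothesis a01 : forall i, 0 <= a i <= 1.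

Definition near_level (h : T -> R) i :=
  forall x, S i x -> zero_one (h x) \/ a i <= h x <= a i + del.

Lemma kform_round n h : bounded_mfun h -> (forall x, 0 <= h x <= 1) ->
  (forall i, (i < n)%N -> near_level h i) ->
  (forall x, zero_one (h x) \/ exists2 i, (i < n)%N & S i x) ->
  exists2 B, measurable B &
    I \1_B - M * (2 * del + del ^+ 2 + eps) * m (unrounded h) <= I h.
Proof.
elim: n h => [|n IH] h bh h01 near cover.
  have zo x : zero_one (h x) by case: (cover x) => // -[].
  exists (h @^-1` [set 1]); first by rewrite -[_ @^-1` _]setTI; exact: bh.1.
  have -> : \1_(h @^-1` [set 1]) = h.
    apply/funext => x; rewrite indicE; case: (zo x) => hx; rewrite hx.
      by rewrite memNset //= hx => /esym/eqP; rewrite oner_eq0.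
    by rewrite mem_set.
  have -> : unrounded h = set0 by apply/seteqP; split => x // /(_ (zo x)).
  by rewrite measure0 /= mulr0 subr0.
(* The points of [S'] become rounded for good, so [m (unrounded h)] pays for
   the error made on [S']. *)
pose S' := S n `&` unrounded h.
have mS' : measurable S' by apply: measurableI => //; exact: measurable_unrounded bh.1.
have S'_le : m S' <= eps.
  exact: le_trans (le_fine_probability mu mS' (mS n) (@subIsetl _ _ _)) (S_le n).
have [t t01 t_le] : exists2 t, zero_one t &
    I (replace_on S' t h) - M * (2 * del + del ^+ 2 + eps) * m S' <= I h.
  apply: (kform_replace_on_le (a := a n)) => // x [Snx ux].
  by case: (near n (ltnSn n) x Snx) => // /ux.
pose h' := replace_on S' t h.
have h'_in x : S' x -> h' x = t by exact: replace_on_in.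
have h'_out x : ~ S' x -> h' x = h x by exact: replace_on_out.
have [B mB B_le] : exists2 B, measurable B &
    I \1_B - M * (2 * del + del ^+ 2 + eps) * m (unrounded h') <= I h'.
  apply: IH.
  - exact: bounded_mfun_replace_on.
  - move=> x; have [/h'_in ->|/h'_out ->//] := pselect (S' x).
    by case: t01 => ->; rewrite lexx ler01.
  - move=> i ilt x Six; have [/h'_in ->|/h'_out ->] := pselect (S' x); first by left.
    exact: near (ltnW ilt) x Six.
  - move=> x; have [/h'_in ->|S'x] := pselect (S' x); first by left.
    rewrite h'_out//; case: (cover x) => [|[i]]; first by left.
    rewrite ltnS leq_eqVlt => /orP[/eqP -> Snx|ilt Six]; last by right; exists i.
    by left; apply: contrapT => ux; apply: S'x.
exists B => //.
rewrite -(unrounded_replace_onU t01 (@subIsetr _ (S n) (unrounded h))) fine_probabilityU//.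
- by rewrite -/h'; lra.
- exact: measurable_unrounded (bounded_mfun_replace_on _ mS' bh).1.
- exact: unrounded_replace_onI.
Qed.

End pieces.

End rounding.

Definition small_cover d (T : measurableType d) (R : realType)
    (mu : probability T R) (eps : R) :=
  exists n (C : nat -> set T), [/\ forall j, measurable (C j),
    forall j, fine (mu (C j)) <= eps & forall x, exists2 j, (j < n)%N & C j x].

Lemma small_cover_level_pieces d (T : measurableType d) (R : realType)
    (mu : probability T R) (g : T -> R) N :
  measurable_fun setT g -> (forall x, 0 <= g x <= 1) -> (0 < N)%N ->
  small_cover mu N%:R^-1 ->
  exists n (S : nat -> set T) (a : nat -> R), [/\ forall i, measurable (S i),
    forall i, fine (mu (S i)) <= N%:R^-1, forall i, 0 <= a i <= 1,
    forall i x, S i x -> a i <= g x <= a i + N%:R^-1 &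
    forall x, exists2 i, (i < n)%N & S i x].
Proof.
move=> mg g01 N0 [n [C [mC C_le cover]]].
have N_gt0 : 0 < N%:R :> R by rewrite ltr0n.
pose level k := [set x | k%:R / N%:R <= g x <= k%:R / N%:R + N%:R^-1].
have mlevel k : measurable (level k).
  rewrite (_ : level k = g @^-1` `[k%:R / N%:R, k%:R / N%:R + N%:R^-1]).
    by rewrite -[_ @^-1` _]setTI; exact: mg.
  by apply/seteqP; split => x /=; rewrite in_itv.
exists (n * N.+1)%N, (fun i => C (i %/ N.+1)%N `&` level (i %% N.+1)%N).
exists (fun i => (i %% N.+1)%N%:R / N%:R); split.
- by move=> i; exact: measurableI.
- move=> i; apply: le_trans (C_le (i %/ N.+1)%N).
  by apply: le_fine_probability; [exact: measurableI | exact: mC | exact: subIsetl].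
- move=> i; rewrite divr_ge0 ?ler0n//= ler_pdivrMr// mul1r ler_nat.
  by rewrite -ltnS ltn_pmod.
- by move=> i x [].
move=> x; have [j jn Cjx] := cover x.
have /andP[g0 g1] := g01 x.
have gN0 : 0 <= g x * N%:R by rewrite mulr_ge0 ?ler0n.
pose k := Num.truncn (g x * N%:R).
have kN : (k <= N)%N.
  rewrite truncn_le_nat; apply: le_lt_trans (_ : N%:R < N.+1%:R); last by rewrite ltr_nat.
  by rewrite -[leRHS]mul1r ler_wpM2r ?ler0n.
exists (j * N.+1 + k)%N.
  rewrite (leq_trans (_ : _ < j * N.+1 + N.+1)%N) ?ltn_add2l ?ltnS//.
  by rewrite -mulSnr leq_mul2r jn orbT.
rewrite divnMDl// modnMDl divn_small ?addn0 ?modn_small ?ltnS//; split => //.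
have /andP[kl ku] := truncn_itv gN0.
rewrite /level /= -/k; apply/andP; split; first by rewrite ler_pdivrMr.
have gk : g x <= k.+1%:R / N%:R by rewrite ler_pdivlMr// ltW.
by move: gk; rewrite -natr1 mulrDl mul1r.
Qed.

Section unit_valued.
Context d (T : measurableType d) (R : realType) (mu : probability T R).
Local Notation m A := (fine (mu A)).
Variables (K : T -> T -> R) (M : R).
Hypothesis mK : measurable_fun setT (fun z : T * T => K z.1 z.2).
Hypothesis K_le : forall x y, `|K x y| <= M.
Local Notation I f := (kform mu K f f).
Hypothesis kform_indic_ge0 : forall A, measurable A -> 0 <= I \1_A.

Lemma kform_ge_small_cover g N : bounded_mfun g -> (forall x, 0 <= g x <= 1) ->
  (0 < N)%N -> small_cover mu N%:R^-1 -> - (4 * M / N%:R) <= I g.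
Proof.
move=> bg g01 N0 cov.
have [n [S [a [mS S_le a01 Sa cover]]]] := small_cover_level_pieces bg.1 g01 N0 cov.
have [B mB B_le] := kform_round mK K_le mS S_le a01 bg g01
  (fun i _ x Six => or_intror (Sa i x Six)) (fun x => or_intror (cover x)).
have M0 : 0 <= M by exact: le_trans (normr_ge0 _) (K_le point point).
have IB := kform_indic_ge0 mB.
have mU : 0 <= m (unrounded g) <= 1.
  by rewrite fine_probability_ge0 fine_probability_le1//; exact: measurable_unrounded bg.1.
have del_ge0 : 0 <= N%:R^-1 :> R by rewrite invr_ge0 ler0n.
have del1 : N%:R^-1 <= 1 :> R by rewrite invf_le1 ?ltr0n// ler1n.
move: B_le del_ge0 del1; set del : R := N%:R^-1; clearbody del => B_le del_ge0 del1.
have err_le : M * (2 * del + del ^+ 2 + del) <= M * (4 * del).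
  by rewrite ler_wpM2l// expr2; have := ler_piMl del_ge0 del1; lra.
have err_ge0 : 0 <= M * (2 * del + del ^+ 2 + del).
  by apply: mulr_ge0 => //; have := sqr_ge0 del; lra.
by nra.
Qed.

Hypothesis covers : forall N, (0 < N)%N -> small_cover mu N%:R^-1.

Lemma kform_unit_ge0 g : bounded_mfun g -> (forall x, 0 <= g x <= 1) -> 0 <= I g.
Proof.
move=> bg g01; rewrite leNgt; apply/negP => Ig_lt0.
pose N := (Num.truncn (4 * M / - I g)).+1.
have N_gt0 : (0 < N)%N by [].
have err_lt : 4 * M / N%:R < - I g.
  rewrite ltr_pdivrMr ?ltr0n//.
  by have := truncnS_gt (4 * M / - I g); rewrite ltr_pdivrMr ?oppr_gt0// (mulrC (- I g)).
have := kform_ge_small_cover bg g01 N_gt0 (covers N_gt0).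
by lra.
Qed.

End unit_valued.

Section quantile.
Context d (T : measurableType d) (R : realType) (mu : probability T R).
Local Notation m A := (fine (mu A)).
Variables (psi : T -> R) (b : R).
Hypothesis mpsi : measurable_fun setT psi.
Hypothesis psi_bd : forall x, - b < psi x < b.
Hypothesis psi_null : forall c, mu (psi @^-1` [set c]) = 0%E.

Let Le t := [set x | psi x <= t].
Let Lt t := [set x | psi x < t].
Let F t := m (Le t).

Let measurable_Le t : measurable (Le t).
Proof.
rewrite (_ : Le t = psi @^-1` `]-oo, t]); first by rewrite -[_ @^-1` _]setTI; exact: mpsi.
by apply/seteqP; split => x /=; rewrite in_itv.
Qed.

Let measurable_Lt t : measurable (Lt t).
Proof.
rewrite (_ : Lt t = psi @^-1` `]-oo, t[); first by rewrite -[_ @^-1` _]setTI; exact: mpsi.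
by apply/seteqP; split => x /=; rewrite in_itv.
Qed.

Let F_le s t : s <= t -> F s <= F t.
Proof. by move=> st; apply: le_fine_probability => // x /= /le_trans; apply. Qed.

Let F_right_limit s t : (forall n, s <= F (t + n.+1%:R^-1)) -> s <= F t.
Proof.
move=> sF; pose A n := Le (t + n.+1%:R^-1).
have A_cvg : (mu \o A) @ \oo --> mu (\bigcap_n A n).
  apply: nonincreasing_cvg_mu.
  - by rewrite (le_lt_trans (probability_le1 _ (measurable_Le _))) ?ltry.
  - by move=> n; exact: measurable_Le.
  - by apply: bigcap_measurableType => n _; exact: measurable_Le.
  - move=> i j ij; apply/subsetPset => x /= /le_trans; apply.
    by rewrite lerD2l lef_pV2 ?posrE// ler_nat.
have AE : \bigcap_n A n = Le t.
  apply/seteqP; split => x /=; last by move=> xt n _; rewrite /A /Le /= (le_trans xt)// lerDl.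
  move=> xA; rewrite /Le /= leNgt; apply/negP => /ltr_add_invr [k tk].
  by have := xA k I; rewrite /A /Le /= leNgt tk.
rewrite AE in A_cvg.
rewrite -lee_fin probability_fineK; last exact: measurable_Le.
rewrite -(cvg_lim _ A_cvg)//.
apply: lime_ge; first by apply/cvg_ex; eexists; exact: A_cvg.
apply: nearW => n /=; rewrite -probability_fineK ?lee_fin; [exact: sF | exact: measurable_Le].
Qed.

Let Lt_left_limit s t : (forall n, F (t - n.+1%:R^-1) <= s) -> m (Lt t) <= s.
Proof.
move=> Fs; pose A n := Le (t - n.+1%:R^-1).
have A_cvg : (mu \o A) @ \oo --> mu (\bigcup_n A n).
  apply: nondecreasing_cvg_mu.
  - by move=> n; exact: measurable_Le.
  - by apply: bigcup_measurable => n _; exact: measurable_Le.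
  move=> i j ij; apply/subsetPset => x /= /le_trans; apply.
  by rewrite lerD2l lerN2 lef_pV2 ?posrE// ler_nat.
have AE : \bigcup_n A n = Lt t.
  apply/seteqP; split => x /=.
    by move=> [n _ /le_lt_trans]; apply; rewrite ltrBlDr ltrDl.
  by move=> /ltr_add_invr [k xk]; exists k => //; rewrite /A /Le /= lerBrDr ltW.
rewrite AE in A_cvg.
rewrite -lee_fin probability_fineK; last exact: measurable_Lt.
rewrite -(cvg_lim _ A_cvg)//.
apply: lime_le; first by apply/cvg_ex; eexists; exact: A_cvg.
apply: nearW => n /=; rewrite -probability_fineK ?lee_fin; [exact: Fs | exact: measurable_Le].
Qed.

Let F_Lt t : F t = m (Lt t).
Proof.
have mt : measurable (psi @^-1` [set t]) by rewrite -[_ @^-1` _]setTI; exact: mpsi.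
rewrite /F (_ : Le t = Lt t `|` psi @^-1` [set t]).
  rewrite fine_probabilityU ?psi_null ?addr0//.
  by apply/seteqP; split => x // -[]; rewrite /Lt /=; lra.
apply/seteqP; split => x; rewrite /Le /Lt /=; last by case=> [/ltW|->].
by rewrite le_eqVlt => /orP[/eqP|]; auto.
Qed.

Let Le_lower : Le (- b) = set0.
Proof.
by apply/seteqP; split => x //=; case/andP: (psi_bd x) => /lt_le_trans h _ /h; rewrite ltxx.
Qed.

Let Le_upper t : b <= t -> Le t = setT.
Proof.
move=> bt; apply/seteqP; split => x //= _.
by case/andP: (psi_bd x) => _ /ltW /le_trans; apply.
Qed.

Definition quantile s := sup [set t | F t < s].

Lemma cdf_quantile s : 0 < s <= 1 -> F (quantile s) = s.
Proof.
case/andP=> s0 s1; set E := [set t | F t < s].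
have E_sup : has_sup E.
  split; first by exists (- b); rewrite /E /= /F Le_lower measure0.
  exists b => t; rewrite /E /= leNgt => Ft; apply/negP => /ltW bt; move: Ft.
  by rewrite /F Le_upper// probability_setT ltNge s1.
apply/eqP; rewrite eq_le; apply/andP; split.
  rewrite F_Lt; apply: Lt_left_limit => n.
  have n_gt0 : 0 < n.+1%:R^-1 :> R by rewrite invr_gt0.
  have [e Ee] := sup_adherent n_gt0 E_sup.
  by move=> /ltW /F_le Fle; exact: ltW (le_lt_trans Fle Ee).
apply: F_right_limit => n; rewrite leNgt; apply/negP => /(sup_upper_bound E_sup).
by rewrite leNgt ltrDl invr_gt0 ltr0n.
Qed.

Lemma small_cover_atomless_law N : (0 < N)%N -> small_cover mu N%:R^-1.
Proof.
move=> N0; have N_gt0 : 0 < N%:R :> R by rewrite ltr0n.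
(* [c k] is a [k / N]-quantile of [psi]; [C j] is the slab between consecutive ones. *)
pose c k := if k == 0%N then - b else if (k < N)%N then quantile (k%:R / N%:R) else b.
have Fc k : F (c k) = (minn k N)%:R / N%:R.
  rewrite /c; case: eqP => [->|/eqP k0]; first by rewrite /F Le_lower measure0 min0n mul0r.
  case: ifPn => kN; last first.
    by rewrite /F Le_upper// probability_setT (minn_idPr _) ?divff ?gt_eqF// leqNgt.
  have kN1 : k%:R / N%:R <= 1 :> R by rewrite ler_pdivrMr// mul1r ler_nat ltnW.
  have kN0 : 0 < k%:R / N%:R :> R by rewrite divr_gt0// ltr0n lt0n.
  by rewrite cdf_quantile ?(minn_idPl (ltnW kN))//; apply/andP; split.
pose C j := Le (c j.+1) `\` Le (c j).
exists N, C; split.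
- by move=> j; apply: measurableD.
- move=> j; have [cle|clt] := leP (c j) (c j.+1); last first.
    rewrite (_ : C j = set0) ?measure0 ?invr_ge0 ?ler0n//.
    apply/seteqP; split => x // -[]; rewrite /Le /= => x1 xj.
    by apply: xj; exact: le_trans x1 (ltW clt).
  have Fsplit : F (c j.+1) = F (c j) + m (C j).
    have sub : Le (c j) `<=` Le (c j.+1) by move=> x /le_trans; apply.
    rewrite /F -fine_probabilityU ?setDUK//; first exact: measurableD.
    by apply/seteqP; split => x // -[? []].
  have step : (minn j.+1 N)%:R <= (minn j N)%:R + 1 :> R.
    by rewrite natr1 ler_nat -minnSS leq_min geq_minl (leq_trans (geq_minr _ _)).
  have : m (C j) = ((minn j.+1 N)%:R - (minn j N)%:R) / N%:R.
    by rewrite mulrBl -!Fc Fsplit addrC addKr.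
  by move=> ->; rewrite ler_pdivrMr// mulVf ?gt_eqF// lerBlDl.
- move=> x; suff below k : psi x <= c k -> exists2 j, (j < k)%N & C j x.
    apply: below; rewrite /c gtn_eqF// ltnn; by case/andP: (psi_bd x) => _ /ltW.
  elim: k => [|k IH].
    by rewrite /c eqxx; case/andP: (psi_bd x) => /lt_le_trans h _ /h; rewrite ltxx.
  have [/IH [j jk Cj] _|xk xk1] := boolP (psi x <= c k); first by exists j => //; exact: ltnW.
  by exists k => //; split => //; apply/negP.
Qed.

End quantile.

Lemma atomless_preimage1 d (T : measurableType d) (R : realType) (mu : probability T R)
    (psi : T -> R) : atomless mu -> injective psi -> measurable_fun setT psi ->
  forall c, mu (psi @^-1` [set c]) = 0%E.
Proof.
move=> atl psi_inj mpsi c; set A := psi @^-1` [set c].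
have mA : measurable A by rewrite -[A]setTI; exact: mpsi.
apply/eqP; rewrite eq_le measure_ge0 andbT leNgt; apply/negP => A_gt0.
have [B [mB BA B_gt0 BA_lt]] := atl A mA A_gt0.
have [[y By]|B0] := pselect (exists y, B y); last first.
  rewrite (_ : B = set0) ?measure0 ?ltxx// in B_gt0.
  by apply/seteqP; split => z // Bz; apply: B0; exists z.
suff AB : A = B by move: BA_lt; rewrite AB ltxx.
apply/seteqP; split => // z Az; suff -> : z = y by [].
by apply: psi_inj; rewrite Az (BA _ By).
Qed.

Lemma standard_borel_small_cover d (T : measurableType d) (R : realType)
    (mu : probability T R) N :
  standard_borel T R -> atomless mu -> (0 < N)%N -> small_cover mu N%:R^-1.
Proof.
move=> [phi [phi_inj [mphi _]]] atl N0.
have mpsi : measurable_fun setT (atan \o phi).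
  by apply: measurableT_comp mphi; apply: continuous_measurable_fun; exact: continuous_atan.
apply: (small_cover_atomless_law mpsi (b := pi / 2)) => //.
- by move=> x; rewrite atan_gtNpi2 atan_ltpi2.
- apply: atomless_preimage1 => // x y /(can_inj (@atanK R)); exact: phi_inj.
Qed.

Section graphon.
Context d (T : measurableType d) (R : realType) (mu : probability T R).
Variables (p : R) (W : T -> T -> R).
Hypothesis gW : graphon W.
Let K x y := W x y - p.

Let W_sym x y : W x y = W y x. Proof. by case: gW. Qed.

Let W01 x y : 0 <= W x y <= 1. Proof. by case: gW. Qed.

Let measurable_W : measurable_fun setT (fun z : T * T => W z.1 z.2).
Proof. by case: gW. Qed.

Let measurable_K : measurable_fun setT (fun z : T * T => K z.1 z.2).
Proof. exact: measurable_funB measurable_W (measurable_cst _). Qed.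

Let K_le x y : `|K x y| <= 1 + `|p|.
Proof. by rewrite (le_trans (ler_normB _ _))// lerD2r ger0_norm; case/andP: (W01 x y). Qed.

Let bounded_W x : bounded_mfun (W x).
Proof.
split; first exact: measurable_fun_pair2 x measurable_W.
by exists 1 => y; rewrite ger0_norm; case/andP: (W01 x y).
Qed.

Hypothesis W_reg : p_regular mu p W.

Let integral_K_ae : {ae mu, forall x a, (\int[mu]_y (a * K x y)%:E = 0)%E}.
Proof.
apply: filterS W_reg => x Wx a.
have bK : bounded_mfun (K x) := bounded_mfunB (bounded_W x) (bounded_mfun_cst T p).
have iW := bounded_mfun_integrable (probability_setT_lty mu) (bounded_W x).
have ip := bounded_mfun_integrable (probability_setT_lty mu) (bounded_mfun_cst T p).
have iK := bounded_mfun_integrable (probability_setT_lty mu) bK.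
under eq_integral => y _ do rewrite EFinM.
rewrite integralZl//.
under eq_integral => y _ do rewrite /K EFinB.
rewrite (integralB_EFin measurableT iW ip) Wx.
have -> : (\int[mu]_y (cst p y)%:E)%E = p%:E.
  by rewrite -[RHS]mule1 -(probability_setT mu) -(integral_cst mu measurableT).
by rewrite subee// mule0.
Qed.

Let kform_cst_r g c : bounded_mfun g -> kform mu K g (cst c) = 0.
Proof.
move=> bg; have iF := kform_integrable mu measurable_K K_le bg (bounded_mfun_cst _ c).
rewrite /kform /Rintegral -(integral12_prod_meas1 iF).
rewrite (@ae_eq_integral _ _ _ mu setT (cst 0%E)) ?integral0//.
- exact: measurable_fubini_F iF.
- apply: filterS integral_K_ae => x Kx _; rewrite /fubini_F /=.
  by under eq_integral => y _ do rewrite mulrAC; exact: Kx.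
Qed.

Let kform_cst_l g c : bounded_mfun g -> kform mu K (cst c) g = 0.
Proof.
move=> bg; have iF := kform_integrable mu measurable_K K_le (bounded_mfun_cst _ c) bg.
rewrite /kform /Rintegral -(integral21_prod_meas1 iF).
rewrite (@ae_eq_integral _ _ _ mu setT (cst 0%E)) ?integral0//.
- exact: measurable_fubini_G iF.
- apply: filterS integral_K_ae => y Ky _; rewrite /fubini_G /=.
  by under eq_integral => x _ do rewrite mulrAC {1}/K W_sym; exact: Ky.
Qed.

Let bounded_W2 : bounded_mfun (fun z : T * T => W z.1 z.2).
Proof. by split => //; exists 1 => z; rewrite ger0_norm; case/andP: (W01 z.1 z.2). Qed.

Hypothesis W_dense : p_locally_dense mu p W.

Let kform_indic_ge0 A : measurable A -> 0 <= kform mu K \1_A \1_A.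
Proof.
move=> mA; have mAA : measurable (A `*` A) by exact: measurableX.
pose WA z := \1_(A `*` A) z * W z.1 z.2.
have bWA : bounded_mfun WA := bounded_mfunM (bounded_mfun_indic _ mAA) bounded_W2.
have iWA := bounded_mfun_integrable (product_probability_setT_lty mu) bWA.
have iAA := bounded_mfun_integrable (product_probability_setT_lty mu) (bounded_mfun_indic R mAA).
have dense : p * fine (mu A) ^+ 2 <= Rintegral (mu \x mu)%E setT WA.
  have := W_dense mA; rewrite integral_mkcond (_ : _ \_ _ = EFin \o WA).
    by rewrite -lee_fin /Rintegral fineK// (integrable_fin_num measurableT iWA).
  by apply/funext => z; rewrite patchE /WA /= indicE; case: ifPn; rewrite ?mul1r ?mul0r.
have -> : kform mu K \1_A \1_A =
    Rintegral (mu \x mu)%E setT (fun z => WA z - p * \1_(A `*` A) z).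
  by congr Rintegral; apply/funext => z; rewrite /WA indicX /K; ring.
rewrite RintegralB//; last first.
  exact: bounded_mfun_integrable (product_probability_setT_lty mu)
    (bounded_mfunM (bounded_mfun_cst _ p) (bounded_mfun_indic R mAA)).
rewrite RintegralZl// Rintegral_indic//= fine_product_probabilityX// -expr2.
by rewrite subr_ge0.
Qed.

Hypothesis covers : forall N, (0 < N)%N -> small_cover mu N%:R^-1.

Lemma graphon_kform_ge0 f : bounded_mfun f -> 0 <= kform mu K f f.
Proof.
move=> bf; have [_ [c fc]] := bf.
pose r := `|c| + 1; have r_gt0 : 0 < r by rewrite ltr_pwDr// normr_ge0.
have f_le x : - r <= f x <= r.
  by rewrite -ler_norml (le_trans (fc x))// (le_trans (ler_norm c))// lerDl.
pose g x := (f x + r) * (2 * r)^-1.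
have bg : bounded_mfun g.
  by apply: bounded_mfunM (bounded_mfun_cst _ _); apply: bounded_mfunD bf (bounded_mfun_cst _ _).
have r2_gt0 : 0 < 2 * r by rewrite mulr_gt0.
have g01 x : 0 <= g x <= 1.
  have /andP[lo hi] := f_le x.
  rewrite /g ler_pdivrMr// mul1r; apply/andP; split; last by lra.
  by apply: mulr_ge0; [lra | rewrite invr_ge0 ltW].
have -> : f = fun x => cst (- r) x + (2 * r) * g x.
  by apply/funext => x; rewrite /g /=; field; rewrite gt_eqF.
have bc := bounded_mfun_cst T (- r).
rewrite (kform_expand mu measurable_K K_le)// !kform_cst_l// kform_cst_r//.
rewrite addr0 mulr0 !add0r mulr_ge0 ?sqr_ge0//.
exact: (kform_unit_ge0 measurable_K K_le kform_indic_ge0 covers bg g01).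
Qed.

Lemma graphon_psd : psd_kernel mu (fun x y => W x y - p).
Proof.
split; first by split; [move=> x y; rewrite W_sym | exact: measurable_K | exists (1 + `|p|)].
move=> f mf [c fc]; have bf : bounded_mfun f by split; last exists c.
by rewrite -(kformE mu measurable_K K_le bf bf) lee_fin graphon_kform_ge0.
Qed.

End graphon.

Unset Implicit Arguments.

Theorem corollary2p15 (d : measure_display) (T : measurableType d) (R : realType)
  (mu : probability T R) (p : R) (W : T -> T -> R) :
  standard_borel T R -> atomless mu ->
  graphon W -> p_locally_dense mu p W -> p_regular mu p W ->
  psd_kernel mu (fun x y => W x y - p).
Proof.
move=> sb atl gW dense reg; apply: graphon_psd => // N N_gt0.
exact: standard_borel_small_cover.
Qed.
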